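(* Let $d\geq3$ and let $T$ be a set of three affinely independent points in $\mathbb{N}_0^d$. Then the $2$-completion $E_2^\infty(T)$ of $T$ equals $\Lambda(T)\cap\mathbb{N}_0^d$.
   Context: $\mathbb{N}_0=\{0,1,2,\dots\}$. For nonempty $\Gamma\subseteq\mathbb{N}_0^d$, $\Lambda(\Gamma)$ is the coset in $\mathbb{Z}^d$ generated by $\Gamma$ (smallest coset of a subgroup of $\mathbb{Z}^d$ containing $\Gamma$); each $\lambda\in\Lambda(\Gamma)$ can be written $\lambda=\gamma+\sum_{\alpha\in\Gamma,\alpha\neq\gamma}m_{\gamma,\alpha}(\alpha-\gamma)$ with $\gamma\in\Gamma$ and integers $m_{\gamma,\alpha}$, finitely many nonzero. $d(\Gamma,\lambda)$ is the infimum over all such representations of $\max\big(\sum_{m_{\gamma,\alpha}>0}m_{\gamma,\alpha},-\sum_{m_{\gamma,\alpha}<0}m_{\gamma,\alpha}\big)$, and $E_n(\Gamma)=\{\lambda\in\Lambda(\Gamma)\cap\mathbb{N}_0^d:d(\Gamma,\lambda)\leq n\}$. Set $E_n^1(T)=E_n(T)$, $E_n^{k+1}(T)=E_n(E_n^k(T))$, and the $n$-completion $E_n^\infty(T)=\bigcup_{k\geq1}E_n^k(T)$. *)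

From HB Require Import structures.
From mathcomp Require Import all_boot all_order all_algebra.
Set Implicit Arguments. Unset Strict Implicit. Unset Printing Implicit Defensive.
Import Order.TTheory GRing.Theory Num.Theory.
Local Open Scope ring_scope.

Definition pt (d : nat) := 'rV[int]_d.

Definition nonneg d (x : pt d) : Prop := forall i : 'I_d, 0 <= x 0 i.

Definition is_subgroup d (H : pt d -> Prop) : Prop :=
  H 0 /\ (forall x y, H x -> H y -> H (x - y)).

(* Lambda(G): the smallest coset c + H of a subgroup H of Z^d containing G *)
Definition Lambda d (G : pt d -> Prop) (l : pt d) : Prop :=
  forall (H : pt d -> Prop) (c : pt d),
    is_subgroup H -> (forall g, G g -> H (g - c)) -> H (l - c).

(* d(G, l) <= n : there is a representation
   l = g + sum_{alpha in G, alpha <> g} m_alpha (alpha - g)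
   (finitely many nonzero m_alpha, encoded as a list of pairs with distinct
   first components) whose positive part and negative part both are <= n.
   Since d(G,l) is an infimum of natural numbers, "d(G,l) <= n" is exactly
   the existence of such a representation. *)
Definition dist_le d (G : pt d -> Prop) (l : pt d) (n : nat) : Prop :=
  exists (g : pt d) (s : seq (pt d * int)),
    [/\ G g /\ uniq (map fst s),
        (forall p, p \in s -> G p.1 /\ p.1 <> g),
        l = g + \sum_(p <- s) (p.1 - g) *~ p.2,
        \sum_(p <- s) (if 0 < p.2 then p.2 else 0) <= n%:Z
      & \sum_(p <- s) (if p.2 < 0 then - p.2 else 0) <= n%:Z].

Definition En d (n : nat) (G : pt d -> Prop) (l : pt d) : Prop :=
  Lambda G l /\ nonneg l /\ dist_le G l n.

(* Eiter n k G = E_n^{k+1}(G) *)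
Fixpoint Eiter d (n k : nat) (G : pt d -> Prop) : pt d -> Prop :=
  match k with
  | 0 => En n G
  | k'.+1 => En n (Eiter n k' G)
  end.

Definition Einf d (n : nat) (G : pt d -> Prop) (l : pt d) : Prop :=
  exists k, Eiter n k G l.

(* affine independence of three points (over Q, equivalently over R) *)
Definition toQ d (x : pt d) : 'rV[rat]_d := map_mx (fun z : int => z%:~R) x.

Definition aff_indep3 d (a b c : pt d) : Prop :=
  forall p q : rat, p *: (toQ b - toQ a) + q *: (toQ c - toQ a) = 0 -> p = 0 /\ q = 0.

(* The points of Lambda(T) are the images of Z^2 under the injective affine chart
   (x, y) |-> a + x (b - a) + y (c - a), and nonnegativity pulls back to a convex
   subset of Z^2.  To reach a target q of that subset, keep a nondegenerate lattice
   triangle p1 p2 p3 whose vertices lie in the current iterate, together with the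
   integral barycentric coordinates l3 <= l2 <= l1 of q with respect to it; start
   from the triangle (b, c, a).  While l3 < 0, replace p3 by p1 + p2 - p3, by
   2 p1 - p3 or by 3 p1 - p2 - p3 (according as l2 > 0, l3 < l2 <= 0 or l2 = l3):
   the new vertex is one move of size at most 2 from the old vertices, lies in the
   convex hull of q and the old vertices (hence is nonnegative), and
   |l1| + |l2| + |l3| strictly drops.  When all coordinates are nonnegative, q is
   a vertex. *)

From mathcomp Require Import all_boot all_order all_algebra.
From mathcomp Require Import zify ring.
Set Implicit Arguments. Unset Strict Implicit. Unset Printing Implicit Defensive.
Import Order.TTheory GRing.Theory Num.Theory.
Local Open Scope ring_scope.

Section Subgroup.
Variables (d : nat) (H : pt d -> Prop).
Hypothesis sH : is_subgroup H.

Lemma subgroupN x : H x -> H (- x).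
Proof. by move=> Hx; have := sH.2 _ _ sH.1 Hx; rewrite sub0r. Qed.

Lemma subgroupD x y : H x -> H y -> H (x + y).
Proof. by move=> Hx Hy; have := sH.2 _ _ Hx (subgroupN Hy); rewrite opprK. Qed.

Lemma subgroupMz x z : H x -> H (x *~ z).
Proof.
move=> Hx; have Hn n : H (x *+ n).
  by elim: n => [|n IH]; [rewrite mulr0n; exact: sH.1 | rewrite mulrS; exact: subgroupD].
by case: z => n; [exact: Hn | rewrite NegzE mulrNz; exact: subgroupN (Hn _)].
Qed.

End Subgroup.

Section Completion.
Variables (d : nat) (G : pt d -> Prop).

Lemma dist_le_refl g n : G g -> dist_le G g n.
Proof. by move=> Gg; exists g, [::]; split; rewrite ?big_nil ?addr0. Qed.

Lemma dist_le_double g x n : G g -> G x -> x <> g -> (2 <= n)%N ->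
  dist_le G (g + (x - g) *~ 2) n.
Proof.
move=> Gg Gx xg n2; exists g, [:: (x, 2)]; split; rewrite ?big_cons ?big_nil //=.
- by move=> p; rewrite inE => /eqP ->.
- by rewrite addr0.
Qed.

Lemma dist_le_pair g x y (m : int) n : G g -> G x -> G y ->
  x <> g -> y <> g -> x <> y -> (m = 1 \/ m = -1) -> (2 <= n)%N ->
  dist_le G (g + (x - g) *~ m + (y - g) *~ m) n.
Proof.
move=> Gg Gx Gy xg yg xy m1 n2; exists g, [:: (x, m); (y, m)].
split; rewrite ?big_cons ?big_nil //=.
- by rewrite inE andbT; split=> //; apply/eqP.
- by move=> p; rewrite !inE => /orP [] /eqP ->.
- by rewrite addr0 addrA.
- by case: m1 => ->.
- by case: m1 => ->.
Qed.

Lemma dist_le_Lambda l n : dist_le G l n -> Lambda G l.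
Proof.
move=> [g [s [[Gg _] Gs -> _ _]]] H c sH HG.
have -> : g + \sum_(p <- s) (p.1 - g) *~ p.2 - c =
          (g - c) + \sum_(p <- s) ((p.1 - c) - (g - c)) *~ p.2.
  by rewrite addrAC; congr (_ + _); apply: eq_bigr => p _; rewrite opprB addrA subrK.
apply: (subgroupD sH); first exact: HG.
rewrite big_seq; apply: big_ind => [|x y|p ps]; [exact: sH.1 | exact: subgroupD |].
by apply/(subgroupMz sH)/sH.2; apply: HG; case: (Gs p ps).
Qed.

Lemma En_of_dist_le n l : dist_le G l n -> nonneg l -> En n G l.
Proof. by move=> dl nl; split; [exact: dist_le_Lambda dl | split]. Qed.

End Completion.

Lemma Lambda_trans d (G G' : pt d -> Prop) l :
  (forall g, G' g -> Lambda G g) -> Lambda G' l -> Lambda G l.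
Proof. by move=> G'G hl H c sH HG; apply: hl => // g /G'G; apply. Qed.

Section Iteration.
Variables (d n : nat) (G : pt d -> Prop).

Lemma Eiter_nonneg k l : Eiter n k G l -> nonneg l.
Proof. by case: k => [|k] [_ []]. Qed.

Lemma Eiter_succ k l : Eiter n k G l -> Eiter n k.+1 G l.
Proof. by move=> hl; apply: En_of_dist_le (dist_le_refl _ hl) (Eiter_nonneg hl). Qed.

Lemma Eiter_Lambda k l : Eiter n k G l -> Lambda G l.
Proof. by elim: k l => [|k IH] l [hl _] //; apply: Lambda_trans hl. Qed.

End Iteration.

Section Chart.
Variables (d : nat) (a b c : pt d).

Definition chart (p : int * int) : pt d := a + (b - a) *~ p.1 + (c - a) *~ p.2.

Lemma intmul_mxE (M : pt d) (n : int) i : (M *~ n) 0 i = M 0 i * n.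
Proof. by rewrite -scaler_int mxE intz mulrC. Qed.

Lemma chart_entry p i :
  chart p 0 i = a 0 i + (b 0 i - a 0 i) * p.1 + (c 0 i - a 0 i) * p.2.
Proof. by rewrite !(mxE, intmul_mxE). Qed.

Lemma chart_vertices : [/\ chart (0, 0) = a, chart (1, 0) = b & chart (0, 1) = c].
Proof. by rewrite /chart /= !mulr1z !mulr0z !addr0 addrC subrK addrC subrK. Qed.

Lemma chart_affine r z x y (m n : int) :
  r.1 = z.1 + m * (x.1 - z.1) + n * (y.1 - z.1) ->
  r.2 = z.2 + m * (x.2 - z.2) + n * (y.2 - z.2) ->
  chart r = chart z + (chart x - chart z) *~ m + (chart y - chart z) *~ n.
Proof.
move=> r1 r2; apply/rowP => i.
by rewrite !(mxE, intmul_mxE) r1 r2; ring.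
Qed.

Lemma chart_inj : aff_indep3 a b c -> injective chart.
Proof.
move=> abc p p' epp'.
have [] := abc (p.1 - p'.1)%:~R (p.2 - p'.2)%:~R.
  apply/rowP => i; rewrite !mxE -!intrB -!intrM -intrD; apply/eqP; rewrite intr_eq0; apply/eqP.
  transitivity (chart p 0 i - chart p' 0 i); first by rewrite !chart_entry; ring.
  by rewrite epp' subrr.
move=> /eqP; rewrite intr_eq0 subr_eq0 => /eqP e1 /eqP; rewrite intr_eq0 subr_eq0 => /eqP e2.
by case: p p' e1 e2 {epp'} => ? ? [? ?] /= -> ->.
Qed.

Lemma nonneg_chart_convex q p1 p2 r (w1 w2 : int) :
  nonneg (chart q) -> nonneg (chart p1) -> nonneg (chart p2) ->
  0 <= w1 -> 0 <= w2 ->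
  (1 + w1 + w2) * r.1 = q.1 + w1 * p1.1 + w2 * p2.1 ->
  (1 + w1 + w2) * r.2 = q.2 + w1 * p1.2 + w2 * p2.2 ->
  nonneg (chart r).
Proof.
move=> nq n1 n2 w1ge0 w2ge0 r1 r2 i.
have K_gt0 : 0 < 1 + w1 + w2 by lia.
rewrite -(pmulr_rge0 _ K_gt0).
have -> : (1 + w1 + w2) * chart r 0 i =
          chart q 0 i + w1 * chart p1 0 i + w2 * chart p2 0 i.
  rewrite !chart_entry; set A := a 0 i; set B := b 0 i - A; set C := c 0 i - A.
  transitivity (A * (1 + w1 + w2) + B * ((1 + w1 + w2) * r.1) + C * ((1 + w1 + w2) * r.2)).
    by ring.
  by rewrite r1 r2; ring.
by rewrite !addr_ge0 ?mulr_ge0.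
Qed.

Lemma Lambda_chart l : Lambda (fun x => x = a \/ x = b \/ x = c) l -> exists p, l = chart p.
Proof.
move=> l_Lambda.
pose H v := exists p : int * int, v = (b - a) *~ p.1 + (c - a) *~ p.2.
have sH : is_subgroup H.
  split; first by exists (0, 0); rewrite !mulr0z addr0.
  move=> _ _ [p ->] [p' ->]; exists (p.1 - p'.1, p.2 - p'.2).
  by rewrite !mulrzBr opprD addrACA.
have [p ep] : H (l - a).
  apply: l_Lambda sH _ => v [->|[->|->]].
  - by exists (0, 0); rewrite subrr !mulr0z addr0.
  - by exists (1, 0); rewrite mulr1z mulr0z addr0.
  - by exists (0, 1); rewrite mulr1z mulr0z add0r.
by exists p; rewrite /chart -addrA -ep addrC subrK.
Qed.

End Chart.

Definition det (p1 p2 p3 : int * int) : int :=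
  (p1.1 - p3.1) * (p2.2 - p3.2) - (p1.2 - p3.2) * (p2.1 - p3.1).

Lemma det_neq p1 p2 p3 : det p1 p2 p3 != 0 -> [/\ p1 <> p2, p1 <> p3 & p2 <> p3].
Proof. by move=> D; split=> e; move: D; rewrite e /det; apply/negP/negPn/eqP; ring. Qed.

Definition bary (q p1 p2 p3 : int * int) (l1 l2 l3 : int) : Prop :=
  [/\ l1 + l2 + l3 = 1, q.1 = l1 * p1.1 + l2 * p2.1 + l3 * p3.1
    & q.2 = l1 * p1.2 + l2 * p2.2 + l3 * p3.2].

Definition norm1 (l1 l2 l3 : int) : nat := (`|l1| + `|l2| + `|l3|)%N.

Section Descent.
Variables (d : nat) (a b c : pt d).
Hypothesis abc : aff_indep3 a b c.
Variable q : int * int.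
Hypothesis q_nonneg : nonneg (chart a b c q).

Local Notation E k := (Eiter 2 k (fun x => x = a \/ x = b \/ x = c)).
Local Notation chart := (chart a b c).

Definition state k p1 p2 p3 l1 l2 l3 : Prop :=
  [/\ bary q p1 p2 p3 l1 l2 l3, det p1 p2 p3 != 0,
      E k (chart p1), E k (chart p2) & E k (chart p3)].

Lemma state_init : nonneg a -> nonneg b -> nonneg c ->
  state 0 (1, 0) (0, 1) (0, 0) q.1 q.2 (1 - q.1 - q.2).
Proof.
move=> na nb nc; have [ea eb ec] := chart_vertices a b c.
split; rewrite ?ea ?eb ?ec //.
- by split=> /=; ring.
- by apply: En_of_dist_le nb; apply: dist_le_refl; right; left.
- by apply: En_of_dist_le nc; apply: dist_le_refl; right; right.
- by apply: En_of_dist_le na; apply: dist_le_refl; left.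
Qed.

Lemma state_swap12 k p1 p2 p3 l1 l2 l3 :
  state k p1 p2 p3 l1 l2 l3 -> state k p2 p1 p3 l2 l1 l3.
Proof.
case=> [[s e1 e2] D E1 E2 E3]; split=> //.
- by split; [lia | rewrite e1; ring | rewrite e2; ring].
- by rewrite (_ : det p2 p1 p3 = - det p1 p2 p3) ?oppr_eq0 // /det; ring.
Qed.

Lemma state_swap23 k p1 p2 p3 l1 l2 l3 :
  state k p1 p2 p3 l1 l2 l3 -> state k p1 p3 p2 l1 l3 l2.
Proof.
case=> [[s e1 e2] D E1 E2 E3]; split=> //.
- by split; [lia | rewrite e1; ring | rewrite e2; ring].
- by rewrite (_ : det p1 p3 p2 = - det p1 p2 p3) ?oppr_eq0 // /det; ring.
Qed.

Lemma state_charts_neq k p1 p2 p3 l1 l2 l3 : state k p1 p2 p3 l1 l2 l3 ->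
  [/\ chart p1 <> chart p2, chart p1 <> chart p3 & chart p2 <> chart p3].
Proof.
case=> _ /det_neq[n12 n13 n23] _ _ _.
by split=> /(chart_inj abc).
Qed.

Lemma state_replace3 k p1 p2 p3 l1 l2 l3 r m1 m2 m3 :
  state k p1 p2 p3 l1 l2 l3 -> bary q p1 p2 r m1 m2 m3 ->
  det p1 p2 r = - det p1 p2 p3 -> nonneg (chart r) -> dist_le (E k) (chart r) 2 ->
  state k.+1 p1 p2 r m1 m2 m3.
Proof.
case=> _ D E1 E2 _ br Dr nr dr; split=> //; rewrite ?Dr ?oppr_eq0 //.
- exact: Eiter_succ.
- exact: Eiter_succ.
- exact: En_of_dist_le.
Qed.

Lemma state_step_sum k p1 p2 p3 l1 l2 l3 : state k p1 p2 p3 l1 l2 l3 ->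
  l3 < 0 -> 1 <= l2 -> 1 <= l1 ->
  state k.+1 p1 p2 (p1.1 + p2.1 - p3.1, p1.2 + p2.2 - p3.2) (l1 + l3) (l2 + l3) (- l3).
Proof.
move=> st l3_lt0 l2_ge1 l1_ge1; case: (st) => [[s e1 e2] _ E1 E2 E3].
have [n12 n13 n23] := state_charts_neq st.
have El3 : l3 = 1 - l1 - l2 by lia.
apply: state_replace3 st _ _ _ _.
- by split=> /=; [lia | rewrite e1; ring | rewrite e2; ring].
- by rewrite /det /=; ring.
- apply: (nonneg_chart_convex (w1 := l2 - 1) (w2 := l1 - 1) q_nonneg
    (Eiter_nonneg E1) (Eiter_nonneg E2)); rewrite /= ?e1 ?e2 ?El3; [lia | lia | ring | ring].
- rewrite (@chart_affine _ _ _ _ _ p3 p1 p2 1 1) /=; [|ring|ring].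
  by apply: dist_le_pair => //; left.
Qed.

Lemma state_step_double k p1 p2 p3 l1 l2 l3 : state k p1 p2 p3 l1 l2 l3 ->
  l3 < 0 -> l2 <= 0 -> l1 + 2 * l3 <= 0 ->
  state k.+1 p1 p2 (2 * p1.1 - p3.1, 2 * p1.2 - p3.2) (l1 + 2 * l3) l2 (- l3).
Proof.
move=> st l3_lt0 l2_le0 l13_le0; case: (st) => [[s e1 e2] _ E1 E2 E3].
have [_ n13 _] := state_charts_neq st.
have El3 : l3 = 1 - l1 - l2 by lia.
apply: state_replace3 st _ _ _ _.
- by split=> /=; [lia | rewrite e1; ring | rewrite e2; ring].
- by rewrite /det /=; ring.
- apply: (nonneg_chart_convex (w1 := - (l1 + 2 * l3)) (w2 := - l2) q_nonneg
    (Eiter_nonneg E1) (Eiter_nonneg E2)); rewrite /= ?e1 ?e2 ?El3; [lia | lia | ring | ring].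
- rewrite (@chart_affine _ _ _ _ _ p3 p1 p1 2 0) /=; [|ring|ring].
  by rewrite mulr0z addr0; apply: dist_le_double.
Qed.

Lemma state_step_triple k p1 p2 p3 l1 l2 l3 : state k p1 p2 p3 l1 l2 l3 ->
  l3 < 0 -> l2 = l3 ->
  state k.+1 p1 p2 (3 * p1.1 - p2.1 - p3.1, 3 * p1.2 - p2.2 - p3.2) (1 + l3) 0 (- l3).
Proof.
move=> st l3_lt0 l23; case: (st) => [[s e1 e2] _ E1 E2 E3].
have [n12 n13 n23] := state_charts_neq st.
have El1 : l1 = 1 - 2 * l3 by lia.
apply: state_replace3 st _ _ _ _.
- by split=> /=; [lia | rewrite e1 El1 l23; ring | rewrite e2 El1 l23; ring].
- by rewrite /det /=; ring.
- apply: (nonneg_chart_convex (w1 := - 1 - l3) (w2 := 0) q_nonneg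
    (Eiter_nonneg E1) (Eiter_nonneg E2)); rewrite /= ?e1 ?e2 ?El1 ?l23; [lia | lia | ring | ring].
- rewrite (@chart_affine _ _ _ _ _ p1 p2 p3 (-1) (-1)) /=; [|ring|ring].
  by apply: dist_le_pair => //; [move=> /esym | move=> /esym | right].
Qed.

Lemma state_descend k p1 p2 p3 l1 l2 l3 : state k p1 p2 p3 l1 l2 l3 ->
  l3 < 0 -> l3 <= l2 <= l1 -> exists p1' p2' p3' l1' l2' l3',
  state k.+1 p1' p2' p3' l1' l2' l3' /\ (norm1 l1' l2' l3' < norm1 l1 l2 l3)%N.
Proof.
move=> st l3_lt0 /andP[l32 l21]; have [[s _ _] _ _ _ _] := st.
have [l2_ge1 | l2_lt1] := lerP 1 l2.
  do 6 eexists; split; first by apply: state_step_sum st l3_lt0 l2_ge1 _; lia.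
  rewrite /norm1; lia.
have [l3_lt_l2 | l23] : l3 < l2 \/ l2 = l3 by lia.
  do 6 eexists; split; first by apply: state_step_double st l3_lt0 _ _; lia.
  rewrite /norm1; lia.
do 6 eexists; split; first exact: state_step_triple st l3_lt0 l23.
rewrite /norm1; lia.
Qed.

Lemma state_sort k p1 p2 p3 l1 l2 l3 : state k p1 p2 p3 l1 l2 l3 ->
  exists p1' p2' p3' l1' l2' l3', [/\ state k p1' p2' p3' l1' l2' l3',
    norm1 l1' l2' l3' = norm1 l1 l2 l3 & l3' <= l2' <= l1'].
Proof.
wlog l21 : p1 p2 l1 l2 / l2 <= l1 => [sorted st|].
  have [l21|l12] := lerP l2 l1; first exact: sorted _ _ _ _ l21 st.
  have [p1' [p2' [p3' [l1' [l2' [l3' [st' n' le']]]]]]] :=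
    sorted _ _ _ _ (ltW l12) (state_swap12 st).
  by do 6 eexists; split; [exact: st' | rewrite n' /norm1; lia | exact: le'].
move=> st; have [l32 | l23] := lerP l3 l2.
  by do 6 eexists; split; [exact: st | | rewrite l32 l21].
have [l31 | l13] := lerP l3 l1.
  by do 6 eexists; split; [exact: state_swap23 st | rewrite /norm1; lia | rewrite l31 ltW].
do 6 eexists; split; first exact: state_swap12 (state_swap23 st).
  by rewrite /norm1; lia.
by rewrite l21 ltW.
Qed.

Lemma state_base k p1 p2 p3 l1 l2 l3 : state k p1 p2 p3 l1 l2 l3 ->
  0 <= l3 -> l3 <= l2 <= l1 -> E k (chart q).
Proof.
case=> [[s e1 e2] _ E1 _ _] l3_ge0 /andP[l32 l21].
have [l1E l2E l3E] : [/\ l1 = 1, l2 = 0 & l3 = 0] by split; lia.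
rewrite l1E l2E l3E !mul1r !mul0r !addr0 in e1 e2.
by rewrite [q]surjective_pairing e1 e2 -surjective_pairing.
Qed.

Lemma state_Einf k p1 p2 p3 l1 l2 l3 : state k p1 p2 p3 l1 l2 l3 ->
  Einf 2 (fun x => x = a \/ x = b \/ x = c) (chart q).
Proof.
move=> st; move en: (norm1 l1 l2 l3) => n.
elim/ltn_ind: n k p1 p2 p3 l1 l2 l3 st en => n IH k p1 p2 p3 l1 l2 l3 st en.
have [p1' [p2' [p3' [l1' [l2' [l3' [st' en' le']]]]]]] := state_sort st.
have [l3_lt0 | l3_ge0] := ltrP l3' 0; last by exists k; exact: state_base st' l3_ge0 le'.
have [p1'' [p2'' [p3'' [l1'' [l2'' [l3'' [st'' lt'']]]]]]] := state_descend st' l3_lt0 le'.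
by apply: (IH _ _ _ _ _ _ _ _ _ st'' erefl); rewrite -en -en'.
Qed.

End Descent.

Theorem lemma3p4 (d : nat) (a b c : pt d) :
  (3 <= d)%N ->
  nonneg a -> nonneg b -> nonneg c ->
  aff_indep3 a b c ->
  forall l : pt d,
    Einf 2 (fun x => x = a \/ x = b \/ x = c) l <->
    (Lambda (fun x => x = a \/ x = b \/ x = c) l /\ nonneg l).
Proof.
move=> _ na nb nc abc l; split.
  by case=> k kl; split; [exact: Eiter_Lambda kl | exact: Eiter_nonneg kl].
case=> /Lambda_chart[p ->] np.
exact: (state_Einf abc np (state_init _ na nb nc)).
Qed.
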